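(* The conditional logics $\mathsf{CKCEM}$ and $\mathsf{CKCEMID}$ do not have the uniform Lyndon interpolation property.
   Context: Formulas of $\mathcal{L}_\triangleright$: atoms, $\bot$, $\wedge,\vee,\to$, binary $\triangleright$; $\top:=\bot\to\bot$, $\neg A:=A\to\bot$. $\mathsf{CE}$ is the smallest set containing all instances of classical tautologies and closed under modus ponens and the rule: from $\phi_0\leftrightarrow\phi_1$ and $\psi_0\leftrightarrow\psi_1$ infer $(\phi_0\triangleright\psi_0)\to(\phi_1\triangleright\psi_1)$. $\mathsf{CKCEM}$ is $\mathsf{CE}$ plus all instances of (CM) $(\phi\triangleright\psi\wedge\theta)\to(\phi\triangleright\psi)\wedge(\phi\triangleright\theta)$, (CC) $(\phi\triangleright\psi)\wedge(\phi\triangleright\theta)\to(\phi\triangleright\psi\wedge\theta)$, (CN) $\phi\triangleright\top$, (CEM) $(\phi\triangleright\psi)\vee(\phi\triangleright\neg\psi)$; $\mathsf{CKCEMID}=\mathsf{CKCEM}+$(ID) $\phi\triangleright\phi$. Positive/negative variables: $V^+(p)=\{p\}$, $V^-(p)=\varnothing$; $V^\pm(\bot)=V^\pm(\top)=\varnothing$; $V^\pm(\phi\odot\psi)=V^\pm(\phi)\cup V^\pm(\psi)$ for $\odot\in\{\wedge,\vee\}$; $V^+(\phi\to\psi)=V^-(\phi)\cup V^+(\psi)$, $V^-(\phi\to\psi)=V^+(\phi)\cup V^-(\psi)$; $V^+(\phi\triangleright\psi)=V^-(\phi)\cup V^+(\psi)$, $V^-(\phi\triangleright\psi)=V^+(\phi)\cup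 V^-(\psi)$. $p^\circ$-free: $p\notin V^\circ(\cdot)$. ULIP for a logic $L$: for every formula $\phi$, atom $p$, $\circ\in\{+,-\}$ there are $p^\circ$-free formulas $\forall^\circ p\,\phi$, $\exists^\circ p\,\phi$ with $V^\dagger(\cdot)\subseteq V^\dagger(\phi)$ for both $\dagger\in\{+,-\}$, such that $L\vdash\forall^\circ p\,\phi\to\phi$; for every $p^\circ$-free $\psi$, $L\vdash\psi\to\phi$ implies $L\vdash\psi\to\forall^\circ p\,\phi$; $L\vdash\phi\to\exists^\circ p\,\phi$; for every $p^\circ$-free $\psi$, $L\vdash\phi\to\psi$ implies $L\vdash\exists^\circ p\,\phi\to\psi$. *)

From Stdlib Require Import Bool Arith.

Inductive form : Type :=
| Atom : nat -> form
| Bot : form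
| And : form -> form -> form
| Or : form -> form -> form
| Imp : form -> form -> form
| Cond : form -> form -> form.

Definition Top : form := Imp Bot Bot.
Definition Neg (A : form) : form := Imp A Bot.
Definition Iff (A B : form) : form := And (Imp A B) (Imp B A).

Fixpoint propositional (f : form) : bool :=
  match f with
  | Atom _ | Bot => true
  | And a b | Or a b | Imp a b => propositional a && propositional b
  | Cond _ _ => false
  end.

Fixpoint eval (v : nat -> bool) (f : form) : bool :=
  match f with
  | Atom n => v n
  | Bot => false
  | And a b => eval v a && eval v b
  | Or a b => eval v a || eval v b
  | Imp a b => implb (eval v a) (eval v b)
  | Cond _ _ => false (* irrelevant: only used on propositional formulas *)
  end.

Fixpoint subst (s : nat -> form) (f : form) : form :=
  match f with
  | Atom n => s n
  | Bot => Bot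
  | And a b => And (subst s a) (subst s b)
  | Or a b => Or (subst s a) (subst s b)
  | Imp a b => Imp (subst s a) (subst s b)
  | Cond a b => Cond (subst s a) (subst s b)
  end.

Definition taut_instance (phi : form) : Prop :=
  exists (t : form) (s : nat -> form),
    propositional t = true /\ (forall v, eval v t = true) /\ subst s t = phi.

Inductive derivable (Ax : form -> Prop) : form -> Prop :=
| d_taut : forall phi, taut_instance phi -> derivable Ax phi
| d_ax : forall phi, Ax phi -> derivable Ax phi
| d_mp : forall phi psi, derivable Ax (Imp phi psi) -> derivable Ax phi ->
         derivable Ax psi
| d_re : forall phi0 phi1 psi0 psi1,
         derivable Ax (Iff phi0 phi1) -> derivable Ax (Iff psi0 psi1) ->
         derivable Ax (Imp (Cond phi0 psi0) (Cond phi1 psi1)).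

Definition CE : form -> Prop := derivable (fun _ => False).

Inductive CKCEM_ax : form -> Prop :=
| ax_CM : forall phi psi th,
    CKCEM_ax (Imp (Cond phi (And psi th)) (And (Cond phi psi) (Cond phi th)))
| ax_CC : forall phi psi th,
    CKCEM_ax (Imp (And (Cond phi psi) (Cond phi th)) (Cond phi (And psi th)))
| ax_CN : forall phi, CKCEM_ax (Cond phi Top)
| ax_CEM : forall phi psi, CKCEM_ax (Or (Cond phi psi) (Cond phi (Neg psi))).

Definition CKCEMID_ax (f : form) : Prop :=
  CKCEM_ax f \/ exists phi, f = Cond phi phi.

Definition CKCEM : form -> Prop := derivable CKCEM_ax.
Definition CKCEMID : form -> Prop := derivable CKCEMID_ax.

(* occ true p f  <-> p in V^+(f);  occ false p f <-> p in V^-(f) *)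
Fixpoint occ (pos : bool) (p : nat) (f : form) : bool :=
  match f with
  | Atom q => pos && Nat.eqb q p
  | Bot => false
  | And a b | Or a b => occ pos p a || occ pos p b
  | Imp a b | Cond a b => occ (negb pos) p a || occ pos p b
  end.

(* Uniform Lyndon interpolation property for a logic L (set of theorems);
   the sign o in {+,-} is encoded by the boolean pos. *)
Definition ULIP (L : form -> Prop) : Prop :=
  forall (phi : form) (p : nat) (pos : bool),
    exists (A E : form),
      occ pos p A = false /\
      (forall (d : bool) (q : nat), occ d q A = true -> occ d q phi = true) /\
      L (Imp A phi) /\
      (forall psi, occ pos p psi = false -> L (Imp psi phi) -> L (Imp psi A)) /\
      occ pos p E = false /\
      (forall (d : bool) (q : nat), occ d q E = true -> occ d q phi = true) /\
      L (Imp phi E) /\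
      (forall psi, occ pos p psi = false -> L (Imp phi psi) -> L (Imp E psi)).

(* Countermodels live on a two-world Stalnaker frame in which every world
   selects the first antecedent-world in the fixed order [true], [false];
   all CKCEMID axioms are valid there.  Suppose [A] were the uniform
   interpolant [forall^- p0 (p0 |> p1)].  Then [A] cannot mention [p0] at all,
   and CEM makes the [p0^-]-free formula [~ (p0 |> ~ p1)] imply [p0 |> p1],
   hence imply [A].  Making [p0] true everywhere and [p1] true only at [true]
   validates [~ (p0 |> ~ p1)] at [true], so [A] holds there; since [A] ignores
   [p0] it still holds when [p0] is made true only at [false], where
   [p0 |> p1] fails at [true], contradicting [A -> p0 |> p1]. *)
From Stdlib Require Import Bool Arith.

Fixpoint holds (V : nat -> bool -> bool) (w : bool) (f : form) : bool :=
  match f with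
  | Atom n => V n w
  | Bot => false
  | And a b => holds V w a && holds V w b
  | Or a b => holds V w a || holds V w b
  | Imp a b => implb (holds V w a) (holds V w b)
  | Cond a b =>
      if holds V true a then holds V true b
      else if holds V false a then holds V false b else true
  end.

Definition valid (f : form) : Prop := forall V w, holds V w f = true.

Lemma holds_subst V w s t : propositional t = true ->
  holds V w (subst s t) = eval (fun n => holds V w (s n)) t.
Proof.
  induction t; simpl; intros Ht; try reflexivity; try discriminate;
    apply andb_prop in Ht as [Ht1 Ht2]; rewrite IHt1, IHt2 by assumption;
    reflexivity.
Qed.

Lemma taut_instance_valid phi : taut_instance phi -> valid phi.
Proof.
  intros (t & s & Hprop & Htaut & <-) V w.
  rewrite holds_subst by assumption. apply Htaut.
Qed.

Lemma valid_Iff_holds a b : valid (Iff a b) -> forall V w, holds V w a = holds V w b.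
Proof.
  intros Hab V w. specialize (Hab V w). simpl in Hab.
  destruct (holds V w a), (holds V w b); simpl in *; congruence.
Qed.

Lemma derivable_valid (Ax : form -> Prop) :
  (forall f, Ax f -> valid f) -> forall phi, derivable Ax phi -> valid phi.
Proof.
  intros HAx phi D. induction D as [phi Ht | phi Hax | phi psi _ IHimp _ IHphi
                                  | phi0 phi1 psi0 psi1 _ IHphi _ IHpsi].
  - now apply taut_instance_valid.
  - now apply HAx.
  - intros V w. specialize (IHimp V w). simpl in IHimp.
    now rewrite IHphi in IHimp.
  - intros V w. simpl.
    rewrite !(valid_Iff_holds _ _ IHphi V), !(valid_Iff_holds _ _ IHpsi V).
    destruct (holds V true phi1), (holds V false phi1),
             (holds V true psi1), (holds V false psi1); reflexivity.
Qed.

Lemma CKCEM_ax_valid f : CKCEM_ax f -> valid f.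
Proof.
  intros Hf V w. destruct Hf; simpl;
  repeat match goal with |- context [holds V ?u ?x] =>
    match x with Atom _ => fail 1 | _ => destruct (holds V u x) end end;
  reflexivity.
Qed.

Lemma CKCEMID_ax_valid f : CKCEMID_ax f -> valid f.
Proof.
  intros [Hf | [phi ->]]; [now apply CKCEM_ax_valid |].
  intros V w. simpl.
  destruct (holds V true phi) eqn:Htrue; [reflexivity |].
  now destruct (holds V false phi).
Qed.

Lemma holds_eq_off_atom p f V1 V2 w :
  (forall n, n <> p -> V1 n = V2 n) ->
  occ true p f = false -> occ false p f = false -> holds V1 w f = holds V2 w f.
Proof.
  intros HV. revert w.
  induction f; intros w Hpos Hneg; simpl in *;
  repeat match goal with H : (_ || _) = false |- _ =>
    apply orb_false_elim in H as [? ?] end;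
  try reflexivity.
  - rewrite HV; [reflexivity |]. intros ->. now rewrite Nat.eqb_refl in Hpos.
  - now rewrite IHf1, IHf2.
  - now rewrite IHf1, IHf2.
  - now rewrite IHf1, IHf2.
  - now rewrite !IHf1, !IHf2.
Qed.

Lemma derivable_neg_Cond_Neg_imp_Cond (Ax : form -> Prop) a b :
  Ax (Or (Cond a b) (Cond a (Neg b))) ->
  derivable Ax (Imp (Neg (Cond a (Neg b))) (Cond a b)).
Proof.
  intros Hcem. apply (d_mp _ (Or (Cond a b) (Cond a (Neg b)))); [| now apply d_ax].
  apply d_taut.
  exists (Imp (Or (Atom 0) (Atom 1)) (Imp (Neg (Atom 1)) (Atom 0))),
         (fun n => match n with 0 => Cond a b | _ => Cond a (Neg b) end).
  split; [reflexivity | split; [| reflexivity]].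
  intros v. simpl. now destruct (v 0), (v 1).
Qed.

Theorem not_ULIP_of_CEM_valid (Ax : form -> Prop) :
  (forall f, Ax f -> valid f) ->
  (forall phi psi, Ax (Or (Cond phi psi) (Cond phi (Neg psi)))) ->
  ~ ULIP (derivable Ax).
Proof.
  intros Hvalid Hcem Hulip.
  destruct (Hulip (Cond (Atom 0) (Atom 1)) 0 false)
    as (A & _ & HAneg & HAvars & HAimp & HAuniv & _).
  assert (HApos : occ true 0 A = false).
  { destruct (occ true 0 A) eqn:Hocc; [| reflexivity].
    now apply HAvars in Hocc. }
  pose proof (derivable_valid Ax Hvalid _
    (HAuniv (Neg (Cond (Atom 0) (Neg (Atom 1)))) eq_refl
       (derivable_neg_Cond_Neg_imp_Cond Ax _ _ (Hcem _ _)))) as HpsiA.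
  set (V1 := fun n (w : bool) => if Nat.eqb n 0 then true else w).
  set (V2 := fun n (w : bool) => if Nat.eqb n 0 then negb w else w).
  assert (HA1 : holds V1 true A = true).
  { specialize (HpsiA V1 true). simpl in HpsiA. now destruct (holds V1 true A). }
  assert (HA2 : holds V2 true A = true).
  { rewrite (holds_eq_off_atom 0 A V2 V1) by
      (assumption || (intros n Hn; apply Nat.eqb_neq in Hn; unfold V1, V2;
                      now rewrite Hn)).
    exact HA1. }
  pose proof (derivable_valid Ax Hvalid _ HAimp V2 true) as HAphi.
  simpl in HAphi. now rewrite HA2 in HAphi.
Qed.

Theorem mainTheorem14 : ~ ULIP CKCEM /\ ~ ULIP CKCEMID.
Proof.
  split; apply not_ULIP_of_CEM_valid.
  - exact CKCEM_ax_valid.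
  - intros; apply ax_CEM.
  - exact CKCEMID_ax_valid.
  - intros; left; apply ax_CEM.
Qed.
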